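(* In the continuous Donation Game, for every $\gamma\in\mathbb{R}$ there do not exist a bounded measurable $\psi:[0,K]\to\mathbb{R}$, a probability measure $\sigma_X^0$ on $[0,K]$ and a Markov kernel $\sigma_X[x,y]$ from $[0,K]^2$ to $[0,K]$ such that for all $x,y\in[0,K]$, $$u_X(x,y)-\gamma=\psi(x)-\lambda\int\psi(s)\,d\sigma_X[x,y](s)-(1-\lambda)\int\psi(s)\,d\sigma_X^0(s).$$
   Context: Continuous Donation Game: fix $K>0$ and measurable nondecreasing functions $b,c:[0,K]\to\mathbb{R}$ with $b(0)=c(0)=0$ and $b(s)>c(s)$ for $s>0$. Action spaces $S_X=S_Y=[0,K]$, payoffs $u_X(x,y)=b(y)-c(x)$, $u_Y(x,y)=b(x)-c(y)$, discount factor $\lambda\in(0,1)$. *)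

From Stdlib Require Import Reals List Classical ClassicalEpsilon.
Open Scope R_scope.

Definition is_sigma_algebra {T : Type} (F : (T -> Prop) -> Prop) : Prop :=
  F (fun _ => True) /\
  (forall A, F A -> F (fun t => ~ A t)) /\
  (forall A : nat -> T -> Prop, (forall n, F (A n)) -> F (fun t => exists n, A n t)).

Definition borel (A : R -> Prop) : Prop :=
  forall F : (R -> Prop) -> Prop, is_sigma_algebra F ->
    (forall a, F (fun x => x <= a)) -> F A.

(* Borel sets of R^2: generated by the half-planes {x <= a} and {y <= a}
   (this is the product Borel sigma-algebra). *)
Definition borel2 (A : R * R -> Prop) : Prop :=
  forall F : (R * R -> Prop) -> Prop, is_sigma_algebra F ->
    (forall a, F (fun p => fst p <= a)) ->
    (forall a, F (fun p => snd p <= a)) -> F A.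

Definition in0K (K s : R) : Prop := 0 <= s <= K.

Definition measurable_on (K : R) (f : R -> R) : Prop :=
  forall a, borel (fun s => in0K K s /\ f s <= a).

Definition measurable2_on (K : R) (g : R -> R -> R) : Prop :=
  forall a, borel2 (fun p => in0K K (fst p) /\ in0K K (snd p) /\ g (fst p) (snd p) <= a).

Definition bounded_on (K : R) (f : R -> R) : Prop :=
  exists M, forall s, in0K K s -> Rabs (f s) <= M.

Definition nondecreasing_on (K : R) (f : R -> R) : Prop :=
  forall s t, in0K K s -> in0K K t -> s <= t -> f s <= f t.

Definition prob_measure_on (K : R) (mu : (R -> Prop) -> R) : Prop :=
  (forall A, borel A -> 0 <= mu A) /\
  (forall A : nat -> R -> Prop,
      (forall n, borel (A n)) ->
      (forall n m s, A n s -> A m s -> n = m) ->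
      infinite_sum (fun n => mu (A n)) (mu (fun s => exists n, A n s))) /\
  mu (fun _ => True) = 1 /\
  mu (in0K K) = 1.

Definition markov_kernel_on (K : R) (k : R -> R -> (R -> Prop) -> R) : Prop :=
  (forall x y, in0K K x -> in0K K y -> prob_measure_on K (k x y)) /\
  (forall A, borel A -> measurable2_on K (fun x y => k x y A)).

(* simple functions: finite lists of (coefficient, Borel set) *)
Definition indicator (A : R -> Prop) (s : R) : R :=
  if excluded_middle_informative (A s) then 1 else 0.

Definition simple_eval (l : list (R * (R -> Prop))%type) (s : R) : R :=
  fold_right (fun p acc => fst p * indicator (snd p) s + acc) 0 l.

Definition simple_int (mu : (R -> Prop) -> R) (l : list (R * (R -> Prop))%type) : R :=
  fold_right (fun p acc => fst p * mu (snd p) + acc) 0 l.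

(* Lebesgue integral of f over [0,K] w.r.t. mu (for bounded measurable f):
   the supremum of the integrals of Borel simple functions below f on [0,K]. *)
Definition integral_is (K : R) (mu : (R -> Prop) -> R) (f : R -> R) (v : R) : Prop :=
  is_lub (fun r => exists l : list (R * (R -> Prop))%type,
             Forall (fun p => borel (snd p)) l /\
             (forall s, in0K K s -> simple_eval l s <= f s) /\
             r = simple_int mu l) v.

From Stdlib Require Import Reals List Classical ClassicalEpsilon Lra Lia.
From Stdlib Require Import FunctionalExtensionality PropExtensionality.
Open Scope R_scope.

(* Since psi is bounded, pick x almost maximising and x' almost minimising psi on [0,K], and
   subtract the identity at (x, 0) from the one at (x', K).  The left side
   b K - c x' + c x is at least b K - c K > 0 because c is nondecreasing with c 0 = 0.  The
   integrals of psi against probability measures on [0,K] lie between inf psi and sup psi, so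
   the right side psi x' - psi x - lam (I2 - I1) is at most -(1 - lam) (sup psi - inf psi)
   plus the approximation errors, which can be made smaller than b K - c K. *)

Lemma pred_ext {T : Type} (A B : T -> Prop) : (forall t, A t <-> B t) -> A = B.
Proof. intro H. extensionality t. apply propositional_extensionality, H. Qed.

Lemma borel_ext A B : borel A -> (forall s, A s <-> B s) -> borel B.
Proof. intros HA H. rewrite <- (pred_ext A B H). exact HA. Qed.

Lemma borelT : borel (fun _ => True).
Proof. intros F HF _. apply HF. Qed.

Lemma borelC A : borel A -> borel (fun s => ~ A s).
Proof. intros HA F HF Hle. apply HF, HA; assumption. Qed.

Lemma borelU (A : nat -> R -> Prop) :
  (forall n, borel (A n)) -> borel (fun s => exists n, A n s).
Proof. intros HA F HF Hle. apply HF. intro n. apply HA; assumption. Qed.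

Lemma borel0 : borel (fun _ => False).
Proof. apply (borel_ext (fun _ => ~ True)); [apply borelC, borelT | tauto]. Qed.

Lemma borelI A B : borel A -> borel B -> borel (fun s => A s /\ B s).
Proof.
  intros HA HB.
  apply (borel_ext (fun s => ~ exists n : nat, if n then ~ A s else ~ B s)).
  - apply borelC, borelU. intros [|n]; apply borelC; assumption.
  - intro s. split.
    + intro H. split; apply NNPP; intro H'; apply H; [exists 0%nat | exists 1%nat]; exact H'.
    + intros [H1 H2] [[|n] Hn]; tauto.
Qed.

Lemma borel_le a : borel (fun s => s <= a).
Proof. intros F _ Hle. apply Hle. Qed.

Lemma borel_ge a : borel (fun s => a <= s).
Proof.
  apply (borel_ext (fun s => ~ exists n, s <= a - / INR (S n))).
  - apply borelC, borelU. intro n. apply borel_le.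
  - intro s. split.
    + intro H. apply Rnot_lt_le. intro Hs. apply H.
      destruct (archimed_cor1 (a - s)) as [N [HN HN0]]; [lra|].
      exists (pred N). rewrite Nat.succ_pred_pos by assumption. lra.
    + intros Hs [n Hn].
      assert (0 < / INR (S n)) by (apply Rinv_0_lt_compat, lt_0_INR; lia).
      lra.
Qed.

Lemma borel_in0K K : borel (in0K K).
Proof.
  apply (borel_ext (fun s => 0 <= s /\ s <= K)).
  - apply borelI; [apply borel_ge | apply borel_le].
  - reflexivity.
Qed.

Section ProbabilityMeasure.

Variables (K : R) (mu : (R -> Prop) -> R).
Hypothesis Hmu : prob_measure_on K mu.

Lemma measure_ext A B : (forall s, A s <-> B s) -> mu A = mu B.
Proof. intro H. f_equal. apply pred_ext, H. Qed.

Lemma measure_ge0 A : borel A -> 0 <= mu A.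
Proof. destruct Hmu as [Hpos _]. apply Hpos. Qed.

(* Countable additivity on the constant sequence of empty sets gives [2 mu(0) <= mu(0)]. *)
Lemma measure0 : mu (fun _ => False) = 0.
Proof.
  destruct Hmu as [_ [Hadd _]].
  pose proof (measure_ge0 _ borel0) as Hge0.
  pose proof (Hadd (fun _ _ => False) (fun _ => borel0) ltac:(contradiction)) as Hsum.
  cbv beta in Hsum.
  rewrite (measure_ext (fun s => exists n : nat, False) (fun _ => False)) in Hsum
    by (intro s; split; [intros [_ []] | contradiction]).
  pose proof (sum_incr _ 1 _ Hsum (fun _ => Hge0)) as H. simpl in H. lra.
Qed.

Lemma measure_split X Y : borel X -> borel Y ->
  mu X = mu (fun s => X s /\ Y s) + mu (fun s => X s /\ ~ Y s).
Proof.
  intros HX HY. destruct Hmu as [_ [Hadd _]].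
  set (A := fun n : nat => match n with
                           | 0%nat => fun s => X s /\ Y s
                           | 1%nat => fun s => X s /\ ~ Y s
                           | _ => fun _ => False end).
  assert (HA : forall n, borel (A n)).
  { intros [|[|n]]; simpl.
    - apply borelI; assumption.
    - apply borelI, borelC; assumption.
    - apply borel0. }
  assert (Hdisj : forall n m s, A n s -> A m s -> n = m)
    by (intros [|[|n]] [|[|m]] s; simpl; tauto).
  pose proof (Hadd A HA Hdisj) as Hsum.
  rewrite (measure_ext _ X) in Hsum.
  2:{ intro s. split.
      - intros [[|[|n]] Hn]; simpl in Hn; tauto.
      - intro Hs. destruct (classic (Y s)); [exists 0%nat | exists 1%nat]; simpl; tauto. }
  assert (Hpartial : forall n, sum_f_R0 (fun n => mu (A n)) (S n)
                                = mu (A 0%nat) + mu (A 1%nat)).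
  { induction n as [|n IH]; [reflexivity|].
    rewrite tech5, IH. simpl. rewrite measure0. ring. }
  apply (uniqueness_sum _ _ _ Hsum).
  intros eps Heps. exists 1%nat. intros [|n] Hn; [lia|].
  rewrite Hpartial. unfold Rdist. simpl. rewrite Rminus_diag, Rabs_R0. exact Heps.
Qed.

Lemma measure_outside B : borel B -> (forall s, B s -> ~ in0K K s) -> mu B = 0.
Proof.
  intros HB Hout. destruct Hmu as [_ [_ [HT H0K]]].
  assert (Hcompl : mu (fun s => ~ in0K K s) = 0).
  { pose proof (measure_split _ _ borelT (borel_in0K K)) as E. cbv beta in E.
    rewrite (measure_ext (fun s => True /\ in0K K s) (in0K K)) in E by tauto.
    rewrite (measure_ext (fun s => True /\ ~ in0K K s) (fun s => ~ in0K K s)) in E by tauto.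
    lra. }
  pose proof (measure_split _ _ (borelC _ (borel_in0K K)) HB) as E. cbv beta in E.
  rewrite (measure_ext (fun s => ~ in0K K s /\ B s) B) in E
    by (intro s; split; [tauto | intro Hs; split; auto]).
  pose proof (measure_ge0 _ HB).
  pose proof (measure_ge0 _ (borelI _ _ (borelC _ (borel_in0K K)) (borelC _ HB))).
  lra.
Qed.

Definition simple_int_on (B : R -> Prop) (l : list (R * (R -> Prop))%type) : R :=
  fold_right (fun p acc => fst p * mu (fun s => snd p s /\ B s) + acc) 0 l.

Lemma simple_int_on_True l : simple_int_on (fun _ => True) l = simple_int mu l.
Proof.
  induction l as [|[a A] l IH]; simpl; [reflexivity|].
  rewrite IH, (measure_ext (fun s => A s /\ True) A) by tauto. reflexivity.
Qed.

Lemma simple_int_on_split l B Y :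
  Forall (fun p => borel (snd p)) l -> borel B -> borel Y ->
  simple_int_on B l
  = simple_int_on (fun s => B s /\ Y s) l + simple_int_on (fun s => B s /\ ~ Y s) l.
Proof.
  intros Hl HB HY. induction Hl as [|[a A] l HA Hl IH]; simpl in *; [ring|].
  rewrite IH, (measure_split _ _ (borelI _ _ HA HB) HY).
  rewrite (measure_ext (fun s => (A s /\ B s) /\ Y s) (fun s => A s /\ B s /\ Y s)) by tauto.
  rewrite (measure_ext (fun s => (A s /\ B s) /\ ~ Y s) (fun s => A s /\ B s /\ ~ Y s))
    by tauto.
  ring.
Qed.

(* Splitting [B] along the set of each summand removes the overlaps between summands. *)
Lemma simple_int_on_le l B M :
  Forall (fun p => borel (snd p)) l -> borel B ->
  (forall s, in0K K s -> B s -> simple_eval l s <= M) ->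
  simple_int_on B l <= M * mu B.
Proof.
  intro Hl. revert B M.
  induction Hl as [|[a A] l HA Hl IH]; intros B M HB Hle; simpl in *.
  - destruct (classic (exists s, in0K K s /\ B s)) as [[s [Hs HBs]] | Hnone].
    + specialize (Hle s Hs HBs). pose proof (measure_ge0 _ HB). nra.
    + rewrite (measure_outside B HB) by (intros s HBs Hs; apply Hnone; eauto). lra.
  - rewrite (simple_int_on_split l B A Hl HB HA), (measure_split B A HB HA).
    rewrite (measure_ext (fun s => A s /\ B s) (fun s => B s /\ A s)) by tauto.
    assert (Hin : simple_int_on (fun s => B s /\ A s) l <= (M - a) * mu (fun s => B s /\ A s)).
    { apply IH; [apply borelI; assumption|].
      intros s Hs [HBs HAs]. specialize (Hle s Hs HBs). unfold indicator in Hle.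
      destruct (excluded_middle_informative (A s)); [lra | contradiction]. }
    assert (Hout : simple_int_on (fun s => B s /\ ~ A s) l <= M * mu (fun s => B s /\ ~ A s)).
    { apply IH; [apply borelI, borelC; assumption|].
      intros s Hs [HBs HAs]. specialize (Hle s Hs HBs). unfold indicator in Hle.
      destruct (excluded_middle_informative (A s)); [contradiction | lra]. }
    lra.
Qed.

Lemma simple_int_le l M :
  Forall (fun p => borel (snd p)) l ->
  (forall s, in0K K s -> simple_eval l s <= M) -> simple_int mu l <= M.
Proof.
  intros Hl Hle. destruct Hmu as [_ [_ [HT _]]].
  rewrite <- simple_int_on_True.
  pose proof (simple_int_on_le l (fun _ => True) M Hl borelT) as H.
  rewrite HT, Rmult_1_r in H. apply H. intros s Hs _. apply Hle, Hs.
Qed.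

Lemma integral_is_bounds f v m M :
  (forall s, in0K K s -> m <= f s <= M) -> integral_is K mu f v -> m <= v <= M.
Proof.
  intros Hf [Hub Hlub]. destruct Hmu as [_ [_ [HT _]]]. split.
  - apply Hub. exists ((m, fun _ => True) :: nil). split; [|split].
    + repeat constructor. apply borelT.
    + intros s Hs. simpl. unfold indicator.
      destruct (excluded_middle_informative True) as [_ | []]; [|exact I].
      specialize (Hf s Hs). lra.
    + simpl. rewrite HT. ring.
  - apply Hlub. intros r [l [Hl [Hle ->]]]. apply simple_int_le; [exact Hl|].
    intros s Hs. specialize (Hle s Hs). specialize (Hf s Hs). lra.
Qed.

End ProbabilityMeasure.

Lemma bounded_on_near_sup K f eps :
  0 <= K -> bounded_on K f -> 0 < eps ->
  exists M, (forall s, in0K K s -> f s <= M) /\ exists x, in0K K x /\ M - eps < f x.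
Proof.
  intros HK [Mb HMb] Heps.
  destruct (completeness (fun r => exists s, in0K K s /\ r = f s)) as [M [Hub Hlub]].
  - exists Mb. intros r [s [Hs ->]].
    apply Rle_trans with (Rabs (f s)); [apply Rle_abs | apply HMb, Hs].
  - exists (f 0), 0. split; [unfold in0K; lra | reflexivity].
  - exists M. split; [intros s Hs; apply Hub; eauto|].
    apply NNPP. intro Hfar.
    assert (M <= M - eps); [|lra].
    apply Hlub. intros r [s [Hs ->]]. apply Rnot_lt_le. intro Hlt. apply Hfar. eauto.
Qed.

Lemma bounded_on_opp K f : bounded_on K f -> bounded_on K (fun s => - f s).
Proof. intros [M HM]. exists M. intros s Hs. rewrite Rabs_Ropp. apply HM, Hs. Qed.


Theorem mainTheorem15
  (K : R) (b c : R -> R) (lam : R)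
  (HK : 0 < K)
  (Hbm : measurable_on K b) (Hcm : measurable_on K c)
  (Hbmon : nondecreasing_on K b) (Hcmon : nondecreasing_on K c)
  (Hb0 : b 0 = 0) (Hc0 : c 0 = 0)
  (Hbc : forall s, 0 < s <= K -> b s > c s)
  (Hlam : 0 < lam < 1) :
  forall gamma : R,
    ~ (exists (psi : R -> R) (sigma0 : (R -> Prop) -> R)
              (sigma : R -> R -> (R -> Prop) -> R),
          bounded_on K psi /\ measurable_on K psi /\
          prob_measure_on K sigma0 /\ markov_kernel_on K sigma /\
          exists I0 : R, integral_is K sigma0 psi I0 /\
          forall x y, in0K K x -> in0K K y ->
            exists Ixy : R, integral_is K (sigma x y) psi Ixy /\
              (b y - c x) - gamma = psi x - lam * Ixy - (1 - lam) * I0).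
Proof.
  intros gamma [psi [sigma0 [sigma [Hpsi [_ [_ [[Hkernel _] [I0 [_ Hrep]]]]]]]]].
  assert (H0 : in0K K 0) by (unfold in0K; lra).
  assert (HKK : in0K K K) by (unfold in0K; lra).
  set (eps := (b K - c K) / 4).
  assert (Heps : 0 < eps) by (specialize (Hbc K ltac:(lra)); unfold eps; lra).
  destruct (bounded_on_near_sup K psi eps ltac:(lra) Hpsi Heps)
    as [M [HM [x [Hx Hxsup]]]].
  destruct (bounded_on_near_sup K (fun s => - psi s) eps ltac:(lra)
              (bounded_on_opp K psi Hpsi) Heps) as [m [Hm [x' [Hx' Hx'inf]]]].
  assert (Hrange : forall s, in0K K s -> - m <= psi s <= M)
    by (intros s Hs; specialize (HM s Hs); specialize (Hm s Hs); lra).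
  destruct (Hrep x 0 Hx H0) as [I1 [HI1 E1]].
  destruct (Hrep x' K Hx' HKK) as [I2 [HI2 E2]].
  pose proof (integral_is_bounds K _ (Hkernel x 0 Hx H0) psi I1 _ _ Hrange HI1).
  pose proof (integral_is_bounds K _ (Hkernel x' K Hx' HKK) psi I2 _ _ Hrange HI2).
  assert (0 <= c x) by (rewrite <- Hc0; apply Hcmon; auto; apply Hx).
  assert (c x' <= c K) by (apply Hcmon; auto; apply Hx').
  assert (- m <= M) by (pose proof (Hrange 0 H0); lra).
  unfold eps in *. nra.
Qed.
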